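(* Let $H\ne\{1\}$ be a reduced atomic unit-cancellative monoid and suppose that at least one of the following holds: (a) there is $L\in\mathcal L(H)$ with $\rho(L)=\rho(H)<\infty$; (b) $H$ is cancellative and its monoid of relations $\sim_H$ is finitely generated; (c) $H$ is commutative and finitely generated. Then there is $M\in\mathbb N$ such that $\rho_k(H)-\rho_{k-1}(H)\le M$ for all $k\ge 2$ (in particular $\rho_k(H)<\infty$ for all $k\in\mathbb N$).
   Context: Monoid = associative semigroup with identity; reduced means the only unit is $1$; unit-cancellative means $a=au$ or $a=ua$ implies $u$ is a unit; atomic means every non-unit is a finite product of atoms (irreducible non-units). For $a\in H$, $\mathsf L(a)\subset\mathbb N$ is the set of all $k$ such that $a$ is a product of $k$ atoms, with $\mathsf L(1)=\{0\}$; $\mathcal L(H)=\{\mathsf L(a)\mid a\in H\}$. For $L\subset\mathbb N_0$, $\rho(L)=\sup(L\cap\mathbb N)/\min(L\cap\mathbb N)$ if $L\cap\mathbb N\neq\emptyset$ and $\rho(L)=1$ otherwise; $\rho(H)=\sup\{\rho(L)\mid L\in\mathcal L(H)\}$. For $k\in\mathbb N$, $\mathcal U_k(H)=\bigcup\{L\in\mathcal L(H)\mid k\in L\}$ and $\rho_k(H)=\sup\mathcal U_k(H)$. The factorization monoid $\mathsf Z(H)$ is the free monoid on the atoms (free abelian if $H$ is commutative), $\pi:\mathsf Z(H)\to H$ the canonical epimorphism, and $\sim_H=\{(x,y)\in\mathsf Z(H)^2\mid \pi(x)=\pi(y)\}$ is the monoid of relations (componentwise multiplication). *)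

From Stdlib Require Import Reals List Permutation Arith.
Import ListNotations.
Open Scope R_scope.

Record Monoid := {
  carrier :> Type;
  mul : carrier -> carrier -> carrier;
  one : carrier;
  mulA : forall a b c, mul a (mul b c) = mul (mul a b) c;
  mul1l : forall a, mul one a = a;
  mul1r : forall a, mul a one = a
}.

Arguments mul {m}.
Arguments one {m}.

Section Defs.
Variable H : Monoid.

Definition is_unit (u : H) : Prop :=
  exists v : H, mul u v = one /\ mul v u = one.

Definition reduced : Prop := forall u : H, is_unit u -> u = one.

Definition unit_cancellative : Prop :=
  forall a u : H, (a = mul a u \/ a = mul u a) -> is_unit u.

Definition cancellative : Prop :=
  (forall a b c : H, mul a b = mul a c -> b = c) /\
  (forall a b c : H, mul b a = mul c a -> b = c).

Definition commutative : Prop := forall a b : H, mul a b = mul b a.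

Definition is_atom (a : H) : Prop :=
  ~ is_unit a /\ forall b c : H, a = mul b c -> is_unit b \/ is_unit c.

Definition prod (l : list H) : H := fold_right mul one l.

Definition atomic : Prop :=
  forall a : H, ~ is_unit a ->
    exists l : list H, Forall is_atom l /\ l <> [] /\ prod l = a.

Definition Lset (a : H) (k : nat) : Prop :=
  (a = one /\ k = 0%nat) \/
  (a <> one /\ exists l : list H, Forall is_atom l /\ length l = k /\ prod l = a).

(* rho(L) = x, for L = L(a) : a subset of N_0.  rho(L) is finite iff
   L ∩ N is empty (then rho(L) = 1) or bounded (then rho = max/min). *)
Definition rho_set_is (L : nat -> Prop) (x : R) : Prop :=
  ((forall k, L k -> k = 0%nat) /\ x = 1) \/
  (exists M m : nat,
      L M /\ (0 < M)%nat /\ (forall k, L k -> (k <= M)%nat) /\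
      L m /\ (0 < m)%nat /\ (forall k, L k -> (0 < k)%nat -> (m <= k)%nat) /\
      x = INR M / INR m).

Definition rho_monoid_is (x : R) : Prop :=
  (forall a : H, exists y, rho_set_is (Lset a) y) /\
  is_lub (fun y => exists a : H, rho_set_is (Lset a) y) x.

Definition Uk (k : nat) (n : nat) : Prop :=
  exists a : H, Lset a k /\ Lset a n.

Definition rhok_is (k : nat) (r : nat) : Prop :=
  Uk k r /\ forall n, Uk k n -> (n <= r)%nat.

(* Factorization monoid Z(H): words (lists) of atoms, identified up to
   permutation when H is commutative (free abelian monoid). *)
Definition factorization (z : list H) : Prop := Forall is_atom z.

Definition zeq (z z' : list H) : Prop :=
  (commutative /\ Permutation z z') \/ (~ commutative /\ z = z').

Definition in_relations (p : list H * list H) : Prop :=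
  factorization (fst p) /\ factorization (snd p) /\ prod (fst p) = prod (snd p).

(* ~_H is finitely generated (as a monoid, componentwise multiplication) *)
Definition relations_fg : Prop :=
  exists gens : list (list H * list H),
    Forall in_relations gens /\
    forall p, in_relations p ->
      exists s : list (list H * list H),
        Forall (fun g => In g gens) s /\
        zeq (fst p) (concat (map fst s)) /\
        zeq (snd p) (concat (map snd s)).

Definition finitely_generated : Prop :=
  exists gens : list H,
    forall a : H, exists s : list H, Forall (fun g => In g gens) s /\ prod s = a.

End Defs.
Arguments rho_set_is L x : clear implicits.

From Stdlib Require Import Reals List Permutation Arith Lia Lra Classical FunctionalExtensionality.
Import ListNotations.

(* Write (k, n) ∈ U for [Uk H k n]. Appending a fixed atom to two factorizations maps
   (k, n) ∈ U to (k + 1, n + 1) ∈ U, and U_0 = {0}, U_1 = {1}; so it suffices to find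
   M such that every n ∈ U_k (k ≥ 2) is at most M above some element of U_{k-1}.
   In cases (a) and (c) this follows from a slope bound Q n ≤ P k on U together with
   an arithmetic progression (k0 + j Q, c0 + j P) inside U. In case (a), P/Q = ρ(H)
   and the progression comes from powers of an element realizing it. In case (b), a
   relation (z, z') is a product of generators; dropping the last generator that
   contributes to z shortens z, and shortens z' by at most the longest generator.
   In case (c), consider the pairs of exponent vectors of factorizations of two
   elements that agree after multiplication by a common factor. These pairs are
   closed under subtracting such a pair lying below, so by Dickson's lemma every one
   is a sum of finitely many minimal ones; the steepest minimal pair bounds every
   slope, and its powers give the progression. *)

Local Open Scope nat_scope.

Section Factorizations.
Variable H : Monoid.

Lemma prod_app (l1 l2 : list H) : prod H (l1 ++ l2) = mul (prod H l1) (prod H l2).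
Proof.
  induction l1 as [|a l IH]; simpl.
  - now rewrite mul1l.
  - now rewrite IH, mulA.
Qed.

Lemma is_unit_one : is_unit H one.
Proof. exists one. split; apply mul1l. Qed.

Lemma atom_neq_one (u : H) : is_atom H u -> u <> one.
Proof. intros [Hu _] ->. exact (Hu is_unit_one). Qed.

Fixpoint pow (a : H) (n : nat) : H :=
  match n with 0 => one | S n => mul a (pow a n) end.

Lemma pow_add (a : H) m n : pow a (m + n) = mul (pow a m) (pow a n).
Proof. induction m; simpl; [now rewrite mul1l | now rewrite IHm, mulA]. Qed.

Lemma prod_repeat (a : H) n : prod H (repeat a n) = pow a n.
Proof. induction n; simpl; congruence. Qed.

Lemma prod_concat_repeat (l : list H) j : prod H (concat (repeat l j)) = pow (prod H l) j.
Proof. induction j; simpl; auto. now rewrite prod_app, IHj. Qed.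

Lemma length_concat_repeat (l : list H) j : length (concat (repeat l j)) = j * length l.
Proof. induction j; simpl; auto. rewrite length_app, IHj. lia. Qed.

Lemma Forall_concat_repeat (P : H -> Prop) (l : list H) j :
  Forall P l -> Forall P (concat (repeat l j)).
Proof. intro F. induction j; simpl; auto. now apply Forall_app. Qed.

Lemma Lset_factorization (a : H) k : Lset H a k ->
  exists z, Forall (is_atom H) z /\ length z = k /\ prod H z = a.
Proof. intros [[-> ->]|[_ Hz]]; auto. now exists []. Qed.

Lemma Uk_factorizations k n : Uk H k n ->
  exists z z', Forall (is_atom H) z /\ Forall (is_atom H) z' /\
    length z = k /\ length z' = n /\ prod H z = prod H z'.
Proof.
  intros [a [Lk Ln]].
  apply Lset_factorization in Lk as [z [F [<- E]]].
  apply Lset_factorization in Ln as [z' [F' [<- E']]].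
  exists z, z'. repeat split; congruence.
Qed.

Hypothesis Hred : reduced H.
Hypothesis Huc : unit_cancellative H.

Lemma mul_eq_one_l (u w : H) : mul u w = one -> u = one.
Proof.
  intros E.
  assert (Uwu : is_unit H (mul w u)).
  { apply (Huc u). left. now rewrite mulA, E, mul1l. }
  apply Hred. exists w. split; [exact E | exact (Hred _ Uwu)].
Qed.

Lemma prod_atoms_eq_one (l : list H) : Forall (is_atom H) l -> prod H l = one -> l = [].
Proof.
  intros F E. destruct l as [|u l]; auto.
  exfalso. exact (atom_neq_one u (Forall_inv F) (mul_eq_one_l _ _ E)).
Qed.

Lemma Uk_of_factorizations (z z' : list H) : Forall (is_atom H) z -> Forall (is_atom H) z' ->
  prod H z = prod H z' -> Uk H (length z) (length z').
Proof.
  intros F F' E. exists (prod H z). destruct z as [|u z].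
  - rewrite (prod_atoms_eq_one z') by auto. split; left; auto.
  - assert (N : prod H (u :: z) <> one).
    { intro E0. apply prod_atoms_eq_one in E0; [discriminate | auto]. }
    split; right; split; eauto.
Qed.

Lemma Uk_of_powers (c z z' : list H) j :
  Forall (is_atom H) c -> Forall (is_atom H) z -> Forall (is_atom H) z' ->
  mul (prod H c) (pow (prod H z) j) = mul (prod H c) (pow (prod H z') j) ->
  Uk H (length c + j * length z) (length c + j * length z').
Proof.
  intros Fc Fz Fz' E. rewrite <- !length_concat_repeat, <- !length_app.
  apply Uk_of_factorizations; try (apply Forall_app; auto using Forall_concat_repeat).
  now rewrite !prod_app, !prod_concat_repeat.
Qed.

Lemma factorization_exists (a : H) : atomic H ->
  exists c, Forall (is_atom H) c /\ prod H c = a.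
Proof.
  intros At. destruct (classic (is_unit H a)) as [->%Hred|U]; [now exists [] |].
  destruct (At a U) as (c & Fc & _ & Ec). eauto.
Qed.

Lemma exists_atom : (exists a : H, a <> one) -> atomic H -> exists u, is_atom H u.
Proof.
  intros [a Ha] At.
  destruct (At a) as [l [F [Hn _]]]; [intros U%Hred; contradiction |].
  destruct l as [|u l]; [congruence |]. inversion F; eauto.
Qed.

Section WithAtom.
Variable u : H.
Hypothesis Hu : is_atom H u.

Lemma Uk_add_diag i k n : Uk H k n -> Uk H (k + i) (n + i).
Proof.
  intros (z & z' & F & F' & <- & <- & E)%Uk_factorizations.
  assert (Fu : Forall (is_atom H) (repeat u i))
    by (apply Forall_forall; intros x ->%repeat_spec; exact Hu).
  rewrite <- (repeat_length u i), <- !length_app.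
  apply Uk_of_factorizations; try (apply Forall_app; auto).
  now rewrite !prod_app, E.
Qed.

Lemma Uk_diag k : Uk H k k.
Proof. apply (Uk_add_diag k 0 0). exists one. split; left; auto. Qed.

End WithAtom.

Lemma Uk_0 n : Uk H 0 n -> n = 0.
Proof.
  intros ([|] & z' & _ & F' & Lz & <- & E)%Uk_factorizations; [|discriminate].
  now rewrite (prod_atoms_eq_one z').
Qed.

Lemma Uk_1 n : Uk H 1 n -> n = 1.
Proof.
  intros ([|u [|]] & z' & F & F' & Lz & <- & E)%Uk_factorizations; try discriminate Lz.
  apply Forall_inv in F as Hu. simpl in E. rewrite mul1r in E.
  destruct z' as [|v z']; [exfalso; exact (atom_neq_one u Hu E)|].
  pose proof (Forall_inv F') as [Hv _]. apply Forall_inv_tail in F'.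
  destruct (proj2 Hu _ _ E) as [U|U%Hred]; [contradiction|].
  now rewrite (prod_atoms_eq_one z').
Qed.

End Factorizations.

Lemma nat_bounded_has_max (P : nat -> Prop) (B : nat) :
  (exists n, P n) -> (forall n, P n -> n <= B) -> exists r, P r /\ forall n, P n -> n <= r.
Proof.
  revert P. induction B as [|B IH]; intros P [n0 Hn0] Hb.
  - exists 0. pose proof (Hb n0 Hn0). replace n0 with 0 in Hn0 by lia. split; auto.
  - destruct (classic (P (S B))) as [HS|HS]; [exists (S B); auto|].
    apply IH; eauto. intros n Pn. specialize (Hb n Pn).
    assert (n <> S B) by (intros ->; contradiction). lia.
Qed.

Section BoundedJumps.
Variable H : Monoid.
Hypothesis Hred : reduced H.
Hypothesis Huc : unit_cancellative H.
Variable u : H.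
Hypothesis Hu : is_atom H u.

Definition bounded_jumps (M : nat) : Prop :=
  forall k n, 2 <= k -> Uk H k n -> exists n', Uk H (k - 1) n' /\ n <= n' + M.

Variable M : nat.
Hypothesis HM : bounded_jumps M.

Lemma Uk_bounded k : exists B, forall n, Uk H k n -> n <= B.
Proof.
  induction k as [[|[|k]] IH] using lt_wf_ind.
  - exists 0. intros n ->%Uk_0; auto.
  - exists 1. intros n ->%Uk_1; auto.
  - destruct (IH (S k)) as [B HB]; [lia|]. exists (B + M). intros n U.
    destruct (HM (S (S k)) n) as [n' [U' Hn']]; auto; [lia|].
    specialize (HB n' U'). lia.
Qed.

Lemma rhok_exists k : exists r, rhok_is H k r.
Proof.
  destruct (Uk_bounded k) as [B HB].
  apply (nat_bounded_has_max _ B); auto. exists k. exact (Uk_diag H Hred Huc u Hu k).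
Qed.

Lemma rhok_jumps_bounded k : 2 <= k ->
  exists r r', rhok_is H k r /\ rhok_is H (k - 1) r' /\ r <= r' + M.
Proof.
  intros Hk. destruct (rhok_exists k) as [r Hr], (rhok_exists (k - 1)) as [r' Hr'].
  exists r, r'. split; [exact Hr|]. split; [exact Hr'|].
  destruct (HM k r Hk (proj1 Hr)) as [n' [U' Hn']]. pose proof (proj2 Hr' n' U'). lia.
Qed.

End BoundedJumps.

(* Write k - 1 = k0 + j Q + i with i < Q: the j-th point of the progression, shifted
   by i along the diagonal, lies in U_{k-1} within P (k0 + Q) of n. *)
Lemma bounded_jumps_of_slope (H : Monoid) (u : H) (P Q k0 c0 : nat) :
  reduced H -> unit_cancellative H -> is_atom H u -> 1 <= Q ->
  (forall k n, Uk H k n -> Q * n <= P * k) ->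
  (forall j, Uk H (k0 + j * Q) (c0 + j * P)) ->
  exists M, bounded_jumps H M.
Proof.
  intros Hred Huc Hu HQ Hslope Hprog. exists (P * (k0 + Q)). intros k n Hk U.
  pose proof (Hslope k n U) as Hn.
  destruct (le_lt_dec k0 (k - 1)) as [Hle|Hlt].
  - set (j := (k - 1 - k0) / Q). set (i := (k - 1 - k0) mod Q).
    assert (Hdiv : k - 1 - k0 = Q * j + i) by (apply Nat.div_mod; lia).
    assert (Hi : i < Q) by (apply Nat.mod_upper_bound; lia).
    exists (c0 + j * P + i). split.
    + replace (k - 1) with (k0 + j * Q + i) by lia.
      apply (Uk_add_diag H Hred Huc u Hu), Hprog.
    + assert (A1 : P * k <= P * (j * Q + (k0 + Q))) by (apply Nat.mul_le_mono_l; lia).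
      assert (A2 : P * (k0 + Q) <= Q * (P * (k0 + Q))) by (apply Nat.le_mul_l; lia).
      assert (Hle' : Q * n <= Q * (j * P + P * (k0 + Q))) by nia.
      apply Nat.mul_le_mono_pos_l in Hle'; lia.
  - exists (k - 1). split; [exact (Uk_diag H Hred Huc u Hu _) | nia].
Qed.

Lemma INR_div_le_cross (a b c d : nat) : 0 < b -> 0 < d ->
  (INR a / INR b <= INR c / INR d)%R -> a * d <= c * b.
Proof.
  intros Hb Hd Hle. apply INR_le. rewrite !mult_INR.
  apply lt_0_INR in Hb, Hd.
  apply Rmult_le_compat_r with (r := (INR b * INR d)%R) in Hle; [|nra].
  replace (INR a / INR b * (INR b * INR d))%R with (INR a * INR d)%R in Hle by (field; lra).
  replace (INR c / INR d * (INR b * INR d))%R with (INR c * INR b)%R in Hle by (field; lra).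
  exact Hle.
Qed.

Section RhoAttained.
Variable H : Monoid.
Hypothesis Hred : reduced H.
Hypothesis Huc : unit_cancellative H.

Lemma slope_bound_of_rho_le (P Q : nat) : 0 < Q ->
  (forall b : H, exists y, rho_set_is (Lset H b) y /\ (y <= INR P / INR Q)%R) ->
  forall k n, Uk H k n -> Q * n <= P * k.
Proof.
  intros HQ Hrho k n U. destruct (Nat.eq_dec k 0) as [->|Hk].
  - apply Uk_0 in U as ->; auto. lia.
  - destruct U as [b [Lk Ln]]. destruct (Hrho b) as [y [[[Z _]|Hmax] Hy]].
    + apply Z in Ln as ->. lia.
    + destruct Hmax as (Mb & mb & _ & HMb & Hmax & _ & Hmb & Hmin & ->).
      apply INR_div_le_cross in Hy; auto.
      pose proof (Hmax n Ln). pose proof (Hmin k Lk ltac:(lia)). nia.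
Qed.

Lemma bounded_jumps_of_rho_attained (u : H) (a : H) (x : R) : is_atom H u ->
  rho_set_is (Lset H a) x -> rho_monoid_is H x -> exists M, bounded_jumps H M.
Proof.
  intros Hu Ra [Hall [Hub _]].
  assert (Hrho : forall b : H, exists y, rho_set_is (Lset H b) y /\ (y <= x)%R).
  { intro b. destruct (Hall b) as [y Hy]. exists y. split; auto. apply Hub. eauto. }
  destruct Ra as [[_ ->]|(M & m & LM & HM & _ & Lm & Hm & _ & ->)].
  - apply (bounded_jumps_of_slope H u 1 1 0 0); auto.
    + apply slope_bound_of_rho_le; auto. simpl. now rewrite Rdiv_1_r.
    + intro j. rewrite Nat.mul_1_r. exact (Uk_diag H Hred Huc u Hu j).
  - apply (bounded_jumps_of_slope H u M m 0 0); auto.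
    + now apply slope_bound_of_rho_le.
    + apply Lset_factorization in LM as (l & F & <- & E).
      apply Lset_factorization in Lm as (l' & F' & <- & E').
      intro j. apply (Uk_of_powers H Hred Huc [] l' l); auto. simpl. congruence.
Qed.

End RhoAttained.

Section RelationsFinitelyGenerated.
Variable H : Monoid.
Hypothesis Hred : reduced H.
Hypothesis Huc : unit_cancellative H.

Lemma zeq_length (z z' : list H) : zeq H z z' -> length z = length z'.
Proof. intros [[_ P]|[_ ->]]; auto using Permutation_length. Qed.

Lemma in_relations_concat (s : list (list H * list H)) : Forall (in_relations H) s ->
  in_relations H (concat (map fst s), concat (map snd s)).
Proof.
  induction s as [|[z z'] s IH]; intros F; simpl.
  - repeat split; constructor.
  - apply Forall_inv in F as Hg. apply Forall_inv_tail, IH in F as (F1 & F2 & E).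
    destruct Hg as (G1 & G2 & Eg). cbn [fst snd] in *.
    repeat split; try (apply Forall_app; auto). cbn [fst snd]. now rewrite !prod_app, E, Eg.
Qed.

(* Drop the last factor of [s] whose first component is nonempty; every later
   factor is the trivial relation, since an empty product of atoms only equals
   an empty one. *)
Lemma relation_product_shorten (gens s : list (list H * list H)) (M : nat) :
  (forall g, In g gens -> length (snd g) <= M) ->
  Forall (fun g => In g gens) s -> Forall (in_relations H) s ->
  concat (map fst s) <> [] ->
  exists s', Forall (in_relations H) s' /\
    length (concat (map fst s')) < length (concat (map fst s)) /\
    length (concat (map snd s)) <= length (concat (map snd s')) + M.
Proof.
  intros HM. induction s as [|g s IH]; intros Gs Rs N; [contradiction|].
  pose proof (Forall_inv Gs) as Gg. apply Forall_inv_tail in Gs.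
  pose proof (Forall_inv Rs) as Rg. apply Forall_inv_tail in Rs.
  simpl. rewrite !length_app.
  destruct (concat (map fst s)) as [|x r] eqn:Efst.
  - exists []. split; [constructor|]. simpl in *.
    destruct (in_relations_concat s Rs) as (_ & F2 & E). rewrite Efst in E.
    rewrite (prod_atoms_eq_one H Hred Huc (concat (map snd s))) by auto.
    specialize (HM g Gg).
    destruct (fst g); [contradiction|]. simpl. lia.
  - destruct (IH Gs Rs ltac:(discriminate)) as (s' & R' & Hlt & Hle).
    exists (g :: s'). split; [now constructor|]. cbn [map concat]. rewrite !length_app. lia.
Qed.

Lemma bounded_jumps_of_relations_fg (u : H) : is_atom H u ->
  relations_fg H -> exists M, bounded_jumps H M.
Proof.
  intros Hu [gens [Rgens Hgen]].
  set (M := list_max (map (fun g => length (snd g)) gens)).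
  assert (HM : forall g, In g gens -> length (snd g) <= M).
  { intros g Hg. pose proof (proj1 (list_max_le _ M) (le_n M)) as Hmax.
    rewrite Forall_forall in Hmax. apply Hmax, in_map_iff. eauto. }
  exists M. intros k n Hk (z & z' & F & F' & <- & <- & E)%Uk_factorizations.
  destruct (Hgen (z, z')) as (s & Gs & Z1%zeq_length & Z2%zeq_length); [repeat split; auto|].
  simpl in Z1, Z2.
  assert (Rs : Forall (in_relations H) s).
  { rewrite Forall_forall in Gs, Rgens |- *. auto. }
  destruct (relation_product_shorten gens s M HM Gs Rs) as (s' & R' & Hlt & Hle).
  { intros E0. rewrite E0 in Z1. simpl in Z1. lia. }
  destruct (in_relations_concat s' R') as (F1 & F2 & E').
  set (t := length z - 1 - length (concat (map fst s'))).
  exists (length (concat (map snd s')) + t). split.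
  - replace (length z - 1) with (length (concat (map fst s')) + t) by lia.
    apply (Uk_add_diag H Hred Huc u Hu), Uk_of_factorizations; auto.
  - lia.
Qed.

End RelationsFinitelyGenerated.

Definition le_pw (f x : nat -> nat) : Prop := forall i, f i <= x i.

Definition vanishes_from (D : nat) (x : nat -> nat) : Prop := forall i, D <= i -> x i = 0.

Definition finite_basis (D : nat) (P : (nat -> nat) -> Prop) : Prop :=
  exists F, (forall f, In f F -> P f) /\
    forall x, P x -> vanishes_from D x -> exists f, In f F /\ le_pw f x.

Definition upd (x : nat -> nat) (D n : nat) : nat -> nat :=
  fun i => if i =? D then n else x i.

Lemma upd_eq x D : upd x D (x D) = x.
Proof. extensionality i. unfold upd. destruct (Nat.eqb_spec i D); congruence. Qed.

Lemma upd_upd x D m n : upd (upd x D m) D n = upd x D n.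
Proof. extensionality i. unfold upd. now destruct (i =? D). Qed.

Lemma vanishes_from_upd0 x D : vanishes_from (S D) x -> vanishes_from D (upd x D 0).
Proof. intros Hx i Hi. unfold upd. destruct (Nat.eqb_spec i D); auto. apply Hx. lia. Qed.

Lemma le_pw_upd f x D n m : le_pw f x -> n <= m -> le_pw (upd f D n) (upd x D m).
Proof. intros Hf Hnm i. unfold upd. destruct (i =? D); auto. Qed.

Lemma finite_lift (P : (nat -> nat) -> Prop) (D : nat) (L : list (nat -> nat)) :
  (forall f, In f L -> exists n, P (upd f D n)) ->
  exists G N, (forall g, In g G -> P g) /\
    forall f, In f L -> exists n, n <= N /\ In (upd f D n) G.
Proof.
  induction L as [|f L IH]; intros HL.
  - exists [], 0. split; intros _ [].
  - destruct IH as (G & N & HG & HLG); [intros g Hg; apply HL; now right|].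
    destruct (HL f) as [n Hn]; [now left|].
    exists (upd f D n :: G), (max n N). split.
    + intros g [<-|Hg]; auto.
    + intros g [<-|Hg].
      * exists n. split; [lia | now left].
      * destruct (HLG g Hg) as (m & Hm & Hin). exists m. split; [lia | now right].
Qed.

Lemma finite_basis_bounded_last D : (forall P, finite_basis D P) ->
  forall P N, finite_basis (S D) (fun x => P x /\ x D < N).
Proof.
  intros Hdim P N. induction N as [|N (Fs & HFs & Hbasis)].
  - exists []. split; [intros _ []|]. intros x [_ Hx]. lia.
  - destruct (Hdim (fun y => P (upd y D N))) as (FN & HFN & HbasisN).
    exists (map (fun f => upd f D N) FN ++ Fs). split.
    + intros g [(f & <- & Hf)%in_map_iff | Hg]%in_app_or.
      * split; [auto|]. unfold upd. rewrite Nat.eqb_refl. lia.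
      * destruct (HFs g Hg). split; auto.
    + intros x [Px Hx] Sx. destruct (Nat.eq_dec (x D) N) as [Ex|Hne].
      * assert (Ex' : upd (upd x D 0) D N = x) by now rewrite upd_upd, <- Ex, upd_eq.
        destruct (HbasisN (upd x D 0)) as (f & Hf & Hle);
          [now rewrite Ex' | now apply vanishes_from_upd0 |].
        exists (upd f D N).
        split; [apply in_or_app; left; now apply (in_map (fun g => upd g D N))|].
        rewrite <- Ex'. now apply le_pw_upd.
      * destruct (Hbasis x) as (g & Hg & Hle); [split; auto; lia | auto |].
        exists g. split; auto. apply in_or_app; auto.
Qed.

(* Induction on D: the basis of the projections to the first D coordinates, with the
   last coordinate raised to a common bound N, covers every x with x D >= N; the
   finitely many slices x D < N are covered by [finite_basis_bounded_last]. *)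
Lemma dickson D P : finite_basis D P.
Proof.
  revert P. induction D as [|D IHD]; intros P.
  - destruct (classic (exists x, P x /\ vanishes_from 0 x)) as [(x0 & P0 & S0)|Hnone].
    + exists [x0]. split; [intros f [<-|[]]; auto|].
      intros x _ _. exists x0. split; [now left|]. intro i. rewrite (S0 i); lia.
    + exists []. split; [intros _ []|]. intros x Px Sx. exfalso. eauto.
  - set (Q := fun y => vanishes_from D y /\ exists n, P (upd y D n)).
    destruct (IHD Q) as (FQ & HFQ & HbasisQ).
    destruct (finite_lift P D FQ) as (G & N & HG & HFQG); [intros f Hf; apply HFQ, Hf|].
    destruct (finite_basis_bounded_last D IHD P N) as (Fs & HFs & Hbasis).
    exists (G ++ Fs). split; [intros g [Hg|Hg]%in_app_or; [auto | apply HFs, Hg]|].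
    intros x Px Sx. destruct (le_lt_dec N (x D)) as [Hle|Hlt].
    + destruct (HbasisQ (upd x D 0)) as (f & Hf & Hfle).
      { split; [now apply vanishes_from_upd0|]. exists (x D). now rewrite upd_upd, upd_eq. }
      { now apply vanishes_from_upd0. }
      destruct (HFQG f Hf) as (n & Hn & Hin). exists (upd f D n). split; [apply in_or_app; auto|].
      rewrite <- (upd_eq x D), <- (upd_upd x D 0). apply le_pw_upd; auto. lia.
    + destruct (Hbasis x) as (g & Hg & Hgle); auto. exists g. split; auto. apply in_or_app; auto.
Qed.

Fixpoint vsum (n : nat) (x : nat -> nat) : nat :=
  match n with 0 => 0 | S n => vsum n x + x n end.

Lemma vsum_ext n x y : (forall i, i < n -> x i = y i) -> vsum n x = vsum n y.
Proof. induction n; intros E; simpl; auto. rewrite IHn, E; auto. Qed.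

Lemma vsum_add n x y : vsum n (fun i => x i + y i) = vsum n x + vsum n y.
Proof. induction n; simpl; lia. Qed.

Lemma vsum_zero n : vsum n (fun _ => 0) = 0.
Proof. induction n; simpl; lia. Qed.

Lemma vsum_eq0 n x : vsum n x = 0 -> forall i, i < n -> x i = 0.
Proof.
  induction n; simpl; intros E i Hi; [lia|].
  destruct (Nat.eq_dec i n) as [->|]; [lia|]. apply IHn; lia.
Qed.

Lemma vsum_le n f x : le_pw f x -> vsum n f <= vsum n x.
Proof. intro Hle. induction n; simpl; auto. specialize (Hle n). lia. Qed.

Lemma vsum_sub n f x : le_pw f x -> vsum n (fun i => x i - f i) = vsum n x - vsum n f.
Proof.
  intro Hle. induction n; simpl; auto.
  pose proof (vsum_le n f x Hle). specialize (Hle n). lia.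
Qed.

Definition unit_vec (i : nat) : nat -> nat := fun j => if j =? i then 1 else 0.

Lemma vsum_unit_vec n i : i < n -> vsum n (unit_vec i) = 1.
Proof.
  induction n; intros Hi; [lia|]. simpl. unfold unit_vec at 2.
  destruct (Nat.eqb_spec n i) as [->|Hne].
  - rewrite (vsum_ext i _ (fun _ => 0)), vsum_zero; auto.
    intros j Hj. unfold unit_vec. destruct (Nat.eqb_spec j i); lia.
  - rewrite IHn; lia.
Qed.

Definition shift (d : nat) (w : nat -> nat) : nat -> nat := fun i => w (d + i).

Definition join (d : nat) (x y : nat -> nat) : nat -> nat :=
  fun i => if i <? d then x i else y (i - d).

Lemma vsum_double d w : vsum (2 * d) w = vsum d w + vsum d (shift d w).
Proof.
  replace (2 * d) with (d + d) by lia. unfold shift.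
  generalize d at 2 4. intros m. induction m as [|m IH]; simpl.
  - now rewrite Nat.add_0_r.
  - rewrite Nat.add_succ_r. simpl. lia.
Qed.

Lemma vsum_join_low d x y : vsum d (join d x y) = vsum d x.
Proof. apply vsum_ext. intros i Hi. unfold join. now rewrite (proj2 (Nat.ltb_lt i d) Hi). Qed.

Lemma shift_join d x y : shift d (join d x y) = y.
Proof.
  extensionality i. unfold shift, join.
  destruct (Nat.ltb_spec (d + i) d); [lia|]. f_equal. lia.
Qed.

Lemma vanishes_from_join d x y : vanishes_from d y -> vanishes_from (2 * d) (join d x y).
Proof. intros Hy i Hi. unfold join. destruct (Nat.ltb_spec i d); [lia|]. apply Hy. lia. Qed.

Lemma list_max_ratio {X : Type} (q p : X -> nat) (F : list X) :
  F <> [] -> (forall f, In f F -> 0 < q f) ->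
  exists f0, In f0 F /\ forall g, In g F -> p g * q f0 <= p f0 * q g.
Proof.
  induction F as [|f F IH]; intros Hne Hpos; [contradiction|].
  destruct F as [|f' F'].
  - exists f. split; [now left|]. intros g [<-|[]]. lia.
  - destruct IH as (f1 & Hf1 & Hmax); [discriminate | intros g Hg; apply Hpos; now right |].
    pose proof (Hpos f1 (or_intror Hf1)). pose proof (Hpos f (or_introl eq_refl)).
    destruct (le_lt_dec (p f * q f1) (p f1 * q f)) as [Hle|Hlt].
    + exists f1. split; [now right|]. intros g [<-|Hg]; auto.
    + exists f. split; [now left|]. intros g [<-|Hg]; [lia|].
      specialize (Hmax g Hg).
      assert (Hmul : q f1 * (p g * q f) <= q f1 * (p f * q g)) by nia.
      apply Nat.mul_le_mono_pos_l in Hmul; auto.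
Qed.

(* Stands in for equality when H is not cancellative. *)
Definition stably_eq (H : Monoid) (a b : H) : Prop := exists h : H, mul h a = mul h b.

Lemma stably_eq_one (H : Monoid) (a : H) : reduced H -> unit_cancellative H ->
  stably_eq H one a -> a = one.
Proof. intros Hred Huc [h E]. rewrite mul1r in E. apply Hred, (Huc h). now left. Qed.

Section CommutativeMonoid.
Variable H : Monoid.
Hypothesis Hc : commutative H.

Lemma mulCA (a b c : H) : mul a (mul b c) = mul b (mul a c).
Proof. now rewrite !mulA, (Hc a b). Qed.

Lemma mulACA (a b c e : H) : mul (mul a b) (mul c e) = mul (mul a c) (mul b e).
Proof. now rewrite <- !mulA, (mulCA b c). Qed.

Lemma stably_eq_cancel (a b c e : H) :
  stably_eq H a b -> stably_eq H (mul a c) (mul b e) -> stably_eq H c e.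
Proof.
  intros [h1 E1] [h2 E2]. exists (mul (mul h1 h2) b).
  assert (K : forall x y, mul (mul (mul h1 h2) x) y = mul (mul h1 x) (mul h2 y))
    by (intros; now rewrite <- (mulA H (mul h1 h2)), mulACA).
  rewrite !K, <- E1 at 1.
  rewrite (mulACA h1 a h2 c), <- (mulA H h1 h2), E2.
  now rewrite (mulA H h1 h2), (mulACA h1 h2 b e).
Qed.

Lemma stably_eq_pow (h a b : H) j : mul h a = mul h b -> mul h (pow H a j) = mul h (pow H b j).
Proof.
  intro E. induction j; simpl; auto.
  now rewrite (mulA H h a), E, <- (mulA H h b), !(mulCA h b), IHj.
Qed.

End CommutativeMonoid.

Section AtomExponents.
Variable H : Monoid.
Hypothesis Hred : reduced H.
Hypothesis Huc : unit_cancellative H.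
Hypothesis Hc : commutative H.
Variable A : list H.

Definition atom_at (i : nat) : H := nth i A one.

Fixpoint vprod (n : nat) (x : nat -> nat) : H :=
  match n with 0 => one | S n => mul (vprod n x) (pow H (atom_at n) (x n)) end.

Fixpoint vword (n : nat) (x : nat -> nat) : list H :=
  match n with 0 => [] | S n => vword n x ++ repeat (atom_at n) (x n) end.

Lemma vprod_ext n x y : (forall i, i < n -> x i = y i) -> vprod n x = vprod n y.
Proof. induction n; intros E; simpl; auto. rewrite IHn, E; auto. Qed.

Lemma vprod_zero n : vprod n (fun _ => 0) = one.
Proof. induction n; simpl; auto. now rewrite IHn, mul1l. Qed.

Lemma vprod_add n x y : vprod n (fun i => x i + y i) = mul (vprod n x) (vprod n y).
Proof. induction n; simpl; [now rewrite mul1l | now rewrite IHn, pow_add, mulACA]. Qed.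

Lemma vprod_sub n f x : le_pw f x -> vprod n x = mul (vprod n f) (vprod n (fun i => x i - f i)).
Proof. intro Hle. rewrite <- vprod_add. apply vprod_ext. intros i _. specialize (Hle i). lia. Qed.

Lemma vprod_unit_vec n i : i < n -> vprod n (unit_vec i) = atom_at i.
Proof.
  induction n; intros Hi; [lia|]. simpl. unfold unit_vec at 2.
  destruct (Nat.eqb_spec n i) as [->|Hne]; simpl.
  - rewrite (vprod_ext i _ (fun _ => 0)), vprod_zero, mul1l, mul1r; auto.
    intros j Hj. unfold unit_vec. destruct (Nat.eqb_spec j i); lia.
  - rewrite mul1r. apply IHn. lia.
Qed.

Lemma prod_vword n x : prod H (vword n x) = vprod n x.
Proof. induction n; simpl; auto. now rewrite prod_app, prod_repeat, IHn. Qed.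

Lemma length_vword n x : length (vword n x) = vsum n x.
Proof. induction n; simpl; auto. now rewrite length_app, repeat_length, IHn. Qed.

Hypothesis HA : Forall (is_atom H) A.

Lemma vword_atoms n x : n <= length A -> Forall (is_atom H) (vword n x).
Proof.
  induction n; intros Hn; simpl; auto. apply Forall_app. split; [apply IHn; lia|].
  apply Forall_forall. intros y ->%repeat_spec. rewrite Forall_forall in HA. apply HA, nth_In. lia.
Qed.

Lemma vsum_of_vprod_one x : vprod (length A) x = one -> vsum (length A) x = 0.
Proof.
  intro E. rewrite <- length_vword, (prod_atoms_eq_one H Hred Huc (vword (length A) x)); auto.
  - now apply vword_atoms.
  - now rewrite prod_vword.
Qed.

Hypothesis HAall : forall u, is_atom H u -> In u A.

Lemma exponent_vector (z : list H) : Forall (is_atom H) z ->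
  exists x, vanishes_from (length A) x /\
    vprod (length A) x = prod H z /\ vsum (length A) x = length z.
Proof.
  induction z as [|u z IH]; intros F.
  - exists (fun _ => 0). repeat split; auto using vprod_zero, vsum_zero.
  - destruct (IH (Forall_inv_tail F)) as (x & Sx & Px & Lx).
    destruct (In_nth A u one (HAall u (Forall_inv F))) as (i & Hi & Ei).
    exists (fun j => unit_vec i j + x j). repeat split.
    + intros j Hj. rewrite Sx by auto. unfold unit_vec. destruct (Nat.eqb_spec j i); lia.
    + now rewrite vprod_add, vprod_unit_vec, Px; [unfold atom_at; rewrite Ei|].
    + rewrite vsum_add, vsum_unit_vec, Lx; auto.
Qed.

Let d := length A.

(* A pair of exponent vectors [x, y] of length [d], stored as one vector [join d x y] of
   length [2 d], so that Dickson's lemma applies to pairs. *)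
Definition relvec (w : nat -> nat) : Prop :=
  vanishes_from (2 * d) w /\ stably_eq H (vprod d w) (vprod d (shift d w)).

Lemma relvec_join x y : vanishes_from d y ->
  stably_eq H (vprod d x) (vprod d y) -> relvec (join d x y).
Proof.
  intros Sy Exy. split; [now apply vanishes_from_join|]. rewrite shift_join.
  replace (vprod d (join d x y)) with (vprod d x); auto.
  apply vprod_ext. intros i Hi. unfold join. now rewrite (proj2 (Nat.ltb_lt i d) Hi).
Qed.

Lemma relvec_sub w f : relvec w -> relvec f -> le_pw f w -> relvec (fun i => w i - f i).
Proof.
  intros [Sw Ew] [_ Ef] Hle. split.
  - intros i Hi. rewrite Sw by auto. lia.
  - apply (stably_eq_cancel H Hc (vprod d f) (vprod d (shift d f))); auto.
    change (shift d (fun i => w i - f i)) with (fun i => shift d w i - shift d f i).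
    rewrite <- !vprod_sub; auto. intro i. apply Hle.
Qed.

Lemma relvec_shift_vsum_eq0 w : relvec w -> vsum d w = 0 -> vsum d (shift d w) = 0.
Proof.
  intros [_ Ew] Z. apply vsum_of_vprod_one, (stably_eq_one H _ Hred Huc).
  rewrite <- (vprod_zero d), (vprod_ext d _ w); auto.
  intros i Hi. symmetry. now apply (vsum_eq0 d).
Qed.

Lemma relvec_basis : A <> [] ->
  exists F, F <> [] /\ (forall f, In f F -> relvec f /\ 0 < vsum d f) /\
    forall w, relvec w -> 0 < vsum (2 * d) w -> exists f, In f F /\ le_pw f w.
Proof.
  intro HAne.
  destruct (dickson (2 * d) (fun w => relvec w /\ 0 < vsum (2 * d) w)) as (F & HF & Hbasis).
  assert (Hd : 0 < d).
  { unfold d. destruct (Nat.eq_dec (length A) 0) as [E|]; [|lia].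
    now apply length_zero_iff_nil in E. }
  exists F. split; [|split].
  - set (e := unit_vec 0).
    assert (Re : relvec (join d e e)).
    { apply relvec_join; [|now exists one].
      intros i Hi. unfold e, unit_vec. destruct (Nat.eqb_spec i 0); lia. }
    destruct (Hbasis (join d e e)) as (f & Hf & _); [|apply Re|].
    + split; auto. rewrite vsum_double, vsum_join_low, shift_join.
      unfold e. rewrite vsum_unit_vec; lia.
    + intros ->. destruct Hf.
  - intros f Hf. destruct (HF f Hf) as [Rf Pf]. split; auto.
    rewrite vsum_double in Pf.
    destruct (Nat.eq_dec (vsum d f) 0) as [Z|]; [|lia].
    pose proof (relvec_shift_vsum_eq0 f Rf Z). lia.
  - intros w Rw Pw. apply Hbasis; [split|]; auto. apply Rw.
Qed.

(* Subtracting a basis element [f] below [w] splits the slope of [w] as a mediant of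
   the slopes of [f] and [w - f]. *)
Lemma relvec_slope_bound (F : list (nat -> nat)) (f0 : nat -> nat) :
  (forall f, In f F -> relvec f /\ 0 < vsum d f) ->
  (forall w, relvec w -> 0 < vsum (2 * d) w -> exists f, In f F /\ le_pw f w) ->
  (forall g, In g F -> vsum d (shift d g) * vsum d f0 <= vsum d (shift d f0) * vsum d g) ->
  forall w, relvec w -> vsum d f0 * vsum d (shift d w) <= vsum d (shift d f0) * vsum d w.
Proof.
  intros HF Hbasis Hmax w. remember (vsum (2 * d) w) as s eqn:Es. revert w Es.
  induction s as [s IH] using lt_wf_ind. intros w Es Rw.
  destruct (Nat.eq_dec s 0) as [->|Hs].
  - rewrite vsum_double in Es. replace (vsum d (shift d w)) with 0 by lia. lia.
  - destruct (Hbasis w Rw ltac:(lia)) as (f & Hf & Hle).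
    assert (Hle' : le_pw (shift d f) (shift d w)) by (intro i; apply Hle).
    pose proof (vsum_le (2 * d) f w Hle). pose proof (vsum_le d f w Hle).
    pose proof (vsum_le d _ _ Hle').
    assert (Hsub : vsum (2 * d) (fun i => w i - f i) < s).
    { rewrite vsum_sub by auto. rewrite !vsum_double in *. pose proof (proj2 (HF f Hf)). lia. }
    specialize (IH _ Hsub _ eq_refl (relvec_sub w f Rw (proj1 (HF f Hf)) Hle)).
    specialize (Hmax f Hf).
    rewrite vsum_sub in IH by auto. unfold shift at 1 in IH.
    change (fun i => w (d + i) - f (d + i)) with (fun i => shift d w i - shift d f i) in IH.
    rewrite vsum_sub in IH by auto. nia.
Qed.

End AtomExponents.

Lemma sublist_satisfying {X : Type} (P : X -> Prop) (L : list X) :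
  exists A, Forall P A /\ forall x, P x -> In x L -> In x A.
Proof.
  induction L as [|x L (A & HA & HLA)]; [exists []; split; auto; intros _ _ []|].
  destruct (classic (P x)) as [Px|Px].
  - exists (x :: A). split; [now constructor|]. intros y Py [<-|Hy]; [now left | right; auto].
  - exists A. split; auto. intros y Py [<-|Hy]; [contradiction | auto].
Qed.

Section CommutativeFinitelyGenerated.
Variable H : Monoid.
Hypothesis Hred : reduced H.
Hypothesis Huc : unit_cancellative H.

Lemma atom_in_prod (u : H) (s : list H) : is_atom H u -> prod H s = u -> In u s.
Proof.
  intros Hu. induction s as [|g s IH]; intro E.
  - exfalso. exact (atom_neq_one H u Hu (eq_sym E)).
  - change (mul g (prod H s) = u) in E.
    destruct (proj2 Hu g (prod H s) (eq_sym E)) as [Ug%Hred | Us%Hred]; rewrite ?Ug, ?Us in E.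
    + right. apply IH. now rewrite mul1l in E.
    + left. now rewrite mul1r in E.
Qed.

Lemma atoms_finite : finitely_generated H ->
  exists A, Forall (is_atom H) A /\ forall u, is_atom H u -> In u A.
Proof.
  intros [gens Hgens]. destruct (sublist_satisfying (is_atom H) gens) as (A & HA & HgA).
  exists A. split; auto. intros u Hu. apply HgA; auto.
  destruct (Hgens u) as (s & Fs & Es). apply atom_in_prod in Es; auto.
  rewrite Forall_forall in Fs. auto.
Qed.

Hypothesis Hc : commutative H.

Lemma bounded_jumps_of_commutative_fg (u : H) : is_atom H u -> atomic H ->
  finitely_generated H -> exists M, bounded_jumps H M.
Proof.
  intros Hu At FG. destruct atoms_finite as (A & HA & HAall); auto.
  set (d := length A).
  destruct (relvec_basis H Hred Huc A HA) as (F & HFne & HF & Hbasis).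
  { intros ->. exact (HAall u Hu). }
  destruct (list_max_ratio (vsum d) (fun f => vsum d (shift d f)) F HFne) as (f0 & Hf0 & Hmax).
  { intros f Hf. apply HF, Hf. }
  destruct (HF f0 Hf0) as [[_ [h Eh]] Pf0].
  destruct (factorization_exists H Hred h At) as (c & Fc & <-).
  apply (bounded_jumps_of_slope H u (vsum d (shift d f0)) (vsum d f0) (length c) (length c));
    auto.
  - intros k n (z & z' & F1 & F2 & <- & <- & E)%Uk_factorizations.
    destruct (exponent_vector H Hc A HAall z F1) as (x & _ & Px & Lx).
    destruct (exponent_vector H Hc A HAall z' F2) as (y & Sy & Py & Ly).
    assert (Rxy : relvec H A (join d x y)) by (apply relvec_join; auto; exists one; congruence).
    pose proof (relvec_slope_bound H Hc A F f0 HF Hbasis Hmax _ Rxy) as Hslope.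
    rewrite shift_join, vsum_join_low in Hslope. unfold d in *. rewrite Lx, Ly in Hslope. lia.
  - intro j. rewrite <- !(length_vword H A).
    apply (Uk_of_powers H Hred Huc); auto using vword_atoms.
    rewrite !prod_vword. now apply stably_eq_pow.
Qed.

End CommutativeFinitelyGenerated.

Theorem proposition3p5 (H : Monoid) :
  (exists a : H, a <> one) ->
  reduced H -> atomic H -> unit_cancellative H ->
  ((exists (a : H) (x : R), rho_set_is (Lset H a) x /\ rho_monoid_is H x) \/
   (cancellative H /\ relations_fg H) \/
   (commutative H /\ finitely_generated H)) ->
  exists M : nat, forall k : nat, (2 <= k)%nat ->
    exists r r' : nat,
      rhok_is H k r /\ rhok_is H (k - 1) r' /\ (r <= r' + M)%nat.
Proof.
  intros Hne Hred At Huc Hcase.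
  destruct (exists_atom H Hred Hne At) as [u Hu].
  assert (Hjumps : exists M, bounded_jumps H M).
  { destruct Hcase as [(a & x & Ra & Rx) | [[_ RF] | [Hc FG]]].
    - exact (bounded_jumps_of_rho_attained H Hred Huc u a x Hu Ra Rx).
    -
      exact (bounded_jumps_of_relations_fg H Hred Huc u Hu RF).
    - exact (bounded_jumps_of_commutative_fg H Hred Huc Hc u Hu At FG). }
  destruct Hjumps as [M HM]. exists M.
  exact (rhok_jumps_bounded H Hred Huc u Hu M HM).
Qed.
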